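(* Let $A(t)$, $t>1$, be a family of complex $2\times 2$ matrices with $\det(A(t))=1$ for all $t$, and suppose there are a real number $\alpha$ and a nonzero complex $2\times 2$ matrix $B$ such that $A(t)=t^\alpha B+o(t^\alpha)$ as $t\to\infty$ (i.e. $t^{-\alpha}A(t)\to B$). Then, as $t\to\infty$, $\tilde R_{(\log t)^{-1}}([A(t)]_{\mathbb{C}^*})$ converges in $PSL_2(\mathbb{C})$ to $[e^\alpha B+e^{-\alpha}(B^{\mathbf c})^*]_{\mathbb{C}^*}$.
   Context: For a complex $2\times 2$ matrix $B=\begin{pmatrix}a&b\\ c&d\end{pmatrix}$ write $B^{\mathbf c}=\begin{pmatrix}d&-b\\ -c&a\end{pmatrix}$ and let $B^*$ denote the conjugate transpose. $\mathbb{C}P^3$ is the projectivization of the space of complex $2\times 2$ matrices, $[B]_{\mathbb{C}^*}$ the class of a nonzero matrix, and $PSL_2(\mathbb{C})\subset\mathbb{C}P^3$ the set of classes with nonzero determinant. For $h>0$, the map $\tilde R_h\colon PSL_2(\mathbb{C})\to PSL_2(\mathbb{C})$ is defined as follows: choose a representative $A$ with $\det(A)=1$, write its polar decomposition $A=PU$ with $P$ positive definite Hermitian and $U$ unitary, and set $\tilde R_h([A]_{\mathbb{C}^*})=[P^hU]_{\mathbb{C}^*}$, where $P^h$ is the positive definite power of $P$. *)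

From HB Require Import structures.
From mathcomp Require Import all_boot all_order all_algebra.
From mathcomp Require Import all_classical all_reals all_analysis.
From mathcomp Require Import complex.
Set Implicit Arguments. Unset Strict Implicit. Unset Printing Implicit Defensive.
Import Order.TTheory GRing.Theory Num.Theory.
Import numFieldNormedType.Exports.
Local Open Scope classical_set_scope.
Local Open Scope ring_scope.

Section Defs.
Variable R : realType.
Local Notation C := (R[i]).
Local Notation M2 := ('M[C]_2).

Definition toC (x : R) : C := Complex x 0.

Definition cconj (z : C) : C := Complex (complex.Re z) (- complex.Im z).

Definition adjC (m n : nat) (B : 'M[C]_(m, n)) : 'M[C]_(n, m) :=
  \matrix_(i, j) cconj (B j i).

Definition cmx (B : M2) : M2 :=
  \matrix_(i < 2, j < 2)
    (if (i == 0) && (j == 0) then B 1 1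
     else if (i == 0) && (j == 1) then - B 0 1
     else if (i == 1) && (j == 0) then - B 1 0
     else B 0 0).

Definition unitary (U : M2) : Prop := U *m adjC U = 1%:M.

Definition pos_def_herm (P : M2) : Prop :=
  adjC P = P /\
  forall v : 'cV[C]_2, v != 0 ->
    let q := (adjC v *m P *m v) 0 0 in complex.Im q = 0 /\ 0 < complex.Re q.

Definition rdiag2 (l1 l2 : R) : M2 :=
  \matrix_(i < 2, j < 2)
    (if i == j then (if i == 0 then toC l1 else toC l2) else 0).

Definition is_mxpow (P : M2) (h : R) (Q : M2) : Prop :=
  exists (V : M2) (l1 l2 : R),
    [/\ unitary V, 0 < l1, 0 < l2,
        P = V *m rdiag2 l1 l2 *m adjC V &
        Q = V *m rdiag2 (l1 `^ h) (l2 `^ h) *m adjC V].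

Definition proj_eq (X Y : M2) : Prop :=
  X != 0 /\ exists c : C, c != 0 /\ Y = c *: X.

(* Rtilde h X Y : for h > 0,  Rtilde_h([X]) = [Y], where [X] is in PSL_2(C):
   choose A with [A] = [X], det A = 1, polar decomposition A = P U,
   and [Y] = [P^h U]. *)
Definition Rtilde (h : R) (X Y : M2) : Prop :=
  \det X != 0 /\
  exists A P U Q : M2,
    [/\ proj_eq X A, \det A = 1, pos_def_herm P, unitary U &
        [/\ A = P *m U, is_mxpow P h Q & proj_eq (Q *m U) Y]].

Definition ccvg (f : R -> C) (l : C) : Prop :=
  (complex.Re (f t) @[t --> +oo] --> complex.Re l) /\
  (complex.Im (f t) @[t --> +oo] --> complex.Im l).

Definition mx_cvg (F : R -> M2) (L : M2) : Prop :=
  forall i j : 'I_2, ccvg (fun t => F t i j) (L i j).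

(* convergence in CP^3 of [F t] to [L] (L nonzero): some nonzero rescalings
   of representatives converge to L (quotient topology of C^4\{0} -> CP^3). *)
Definition proj_cvg (F : R -> M2) (L : M2) : Prop :=
  L != 0 /\
  exists c : R -> C, (\forall t \near +oo, c t != 0) /\
                     mx_cvg (fun t => c t *: F t) L.
End Defs.

From HB Require Import structures.
From mathcomp Require Import all_boot all_order all_algebra.
From mathcomp Require Import all_classical all_reals all_analysis.
From mathcomp Require Import complex.
From mathcomp Require Import ring lra.
Import Order.TTheory GRing.Theory Num.Theory.
Import numFieldNormedType.Exports.
Local Open Scope classical_set_scope.
Local Open Scope ring_scope.
Set Implicit Arguments. Unset Strict Implicit. Unset Printing Implicit Defensive.

(** Normalise the representative to [det A = 1] and write its polar decomposition
    A = P U with P = V diag(l, 1/l) V^*.  Then (A^c)^* = (A^-1)^* = P^-1 U, so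
    P^h U = V diag(l^h, l^-h) V^* U lies on the pencil A + r (A^c)^* spanned by A
    and (A^c)^*.  Solving the 2x2 linear system for r gives r = |A|^(-2h) + O(h),
    where |A|^2 = l^2 + l^-2 is the squared Frobenius norm.  For h = 1 / ln t we
    have |A(t)|^(2h) -> e^(2 alpha), hence r -> e^(-2 alpha) and the rescaled
    pencil t^-alpha A(t) + r (t^-alpha A(t))^c* converges to B + e^(-2 alpha) (B^c)^* .
    The limit is invertible: det B >= 0 as a limit of t^(-2 alpha), and
    Re det (x B + y (B^c)^* ) = (x^2 + y^2) det B + x y |B|^2 > 0 for x, y > 0. *)

Section ComplexCoordinates.
Variable R : realType.
Local Notation C := R[i].
Implicit Types (x y z : C) (a : R).

Lemma complex_ReD x y : complex.Re (x + y) = complex.Re x + complex.Re y.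
Proof. by case: x; case: y. Qed.
Lemma complex_ImD x y : complex.Im (x + y) = complex.Im x + complex.Im y.
Proof. by case: x; case: y. Qed.
Lemma complex_ReN x : complex.Re (- x) = - complex.Re x. Proof. by case: x. Qed.
Lemma complex_ImN x : complex.Im (- x) = - complex.Im x. Proof. by case: x. Qed.
Lemma complex_ReM x y :
  complex.Re (x * y) = complex.Re x * complex.Re y - complex.Im x * complex.Im y.
Proof. by case: x; case: y. Qed.
Lemma complex_ImM x y :
  complex.Im (x * y) = complex.Re x * complex.Im y + complex.Im x * complex.Re y.
Proof. by case: x => a b; case: y => c d /=; ring. Qed.
Lemma Re_toC a : complex.Re (toC a) = a. Proof. by []. Qed.
Lemma Im_toC a : complex.Im (toC a) = 0. Proof. by []. Qed.
Lemma Re_cconj z : complex.Re (cconj z) = complex.Re z. Proof. by []. Qed.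
Lemma Im_cconj z : complex.Im (cconj z) = - complex.Im z. Proof. by []. Qed.

Definition reimE :=
  (complex_ReD, complex_ImD, complex_ReN, complex_ImN, complex_ReM, complex_ImM,
   Re_toC, Im_toC, Re_cconj, Im_cconj).

Lemma complex_ext x y :
  complex.Re x = complex.Re y -> complex.Im x = complex.Im y -> x = y.
Proof. by case: x => a b; case: y => c d /= -> ->. Qed.

Lemma cconjE z : cconj z = (z^*)%C. Proof. by case: z. Qed.

Lemma cconj_toC a : cconj (toC a) = toC a.
Proof. by apply: complex_ext; rewrite !reimE ?oppr0. Qed.

Lemma cconjM x y : cconj (x * y) = cconj x * cconj y.
Proof. by rewrite !cconjE rmorphM. Qed.

Lemma toCM a (b : R) : toC (a * b) = toC a * toC b.
Proof. by apply: complex_ext; rewrite !reimE; ring. Qed.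

Lemma toC_eq0 a : (toC a == 0) = (a == 0).
Proof. by rewrite -(inj_eq (@complexI R)). Qed.

End ComplexCoordinates.

Section Matrix2.
Variable R : realType.
Local Notation C := R[i].
Local Notation M2 := 'M[C]_2.
Implicit Types X Y N : M2.

Lemma ord2P (i : 'I_2) : i = 0 \/ i = 1.
Proof. by case: i => [[|[|//]] Hi]; [left | right]; apply: val_inj. Qed.

Lemma lift0_ord2 : lift ord0 ord0 = 1 :> 'I_2.
Proof. exact: val_inj. Qed.

Lemma matrix2P X Y :
  X 0 0 = Y 0 0 -> X 0 1 = Y 0 1 -> X 1 0 = Y 1 0 -> X 1 1 = Y 1 1 -> X = Y.
Proof.
move=> e00 e01 e10 e11; apply/matrixP => i j.
by have [->|->] := ord2P i; have [->|->] := ord2P j.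
Qed.

Lemma mulmx2E X Y i j : (X *m Y) i j = X i 0 * Y 0 j + X i 1 * Y 1 j.
Proof. by rewrite mxE !big_ord_recl big_ord0 addr0 lift0_ord2. Qed.

Lemma det2E X : \det X = X 0 0 * X 1 1 - X 0 1 * X 1 0.
Proof.
rewrite (expand_det_row _ 0) !big_ord_recl big_ord0 addr0 /cofactor !det_mx11.
rewrite !mxE /= lift0_ord2 (_ : lift 1 0 = 0 :> 'I_2); last exact: val_inj.
by rewrite /bump /= expr0 expr1 mul1r mulN1r mulrN.
Qed.

Lemma trace2E X : \tr X = X 0 0 + X 1 1.
Proof. by rewrite /mxtrace !big_ord_recl big_ord0 addr0 lift0_ord2. Qed.

Lemma adjCE (m n : nat) (X : 'M[C]_(m, n)) i j : adjC X i j = cconj (X j i).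
Proof. by rewrite mxE. Qed.

Lemma adjCK X : adjC (adjC X) = X.
Proof. by apply: matrix2P; rewrite !mxE !cconjE conjcK. Qed.

Lemma adjC1 : adjC (1%:M : M2) = 1%:M.
Proof. by apply: matrix2P; rewrite !mxE /= ?cconjE ?conjc0 ?conjc1. Qed.

Lemma adjCZ (c : C) X : adjC (c *: X) = cconj c *: adjC X.
Proof. by apply: matrix2P; rewrite !mxE !cconjE rmorphM. Qed.

Lemma adjC_mulmx X Y : adjC (X *m Y) = adjC Y *m adjC X.
Proof.
apply: matrix2P; rewrite !adjCE !mulmx2E !adjCE !cconjE rmorphD !rmorphM /=;
by rewrite mulrC [_ * _^*%C]mulrC.
Qed.

Lemma det_adjC X : \det (adjC X) = cconj (\det X).
Proof.
by rewrite !det2E !adjCE !cconjE rmorphB !rmorphM /= [(X 1 0)^*%C * _]mulrC.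
Qed.

Lemma cmxZ (c : C) X : cmx (c *: X) = c *: cmx X.
Proof. by apply: matrix2P; rewrite !mxE /= ?mulrN. Qed.

Lemma mulmx_cmx X : X *m cmx X = (\det X)%:M.
Proof. by apply: matrix2P; rewrite !mulmx2E !mxE /= det2E ?mulr1n ?mulr0n; ring. Qed.

Lemma unitary_adjC_mulmx (U : M2) : unitary U -> adjC U *m U = 1%:M.
Proof. exact: mulmx1C. Qed.

Lemma adjC_cmx_eq X N : \det X = 1 -> adjC X *m N = 1%:M -> adjC (cmx X) = N.
Proof.
move=> detX XN; have linv : adjC (cmx X) *m adjC X = 1%:M.
  by rewrite -adjC_mulmx mulmx_cmx detX adjC1.
by rewrite -[LHS]mulmx1 -XN mulmxA linv mul1mx.
Qed.

Lemma sqr_eq1_cconj (c : C) : c ^+ 2 = 1 -> cconj c = c.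
Proof.
by move/eqP; rewrite sqrf_eq1 => /orP[]/eqP->; apply: complex_ext; rewrite /= ?oppr0.
Qed.

Lemma unitaryZ (c : C) (U : M2) :
  c * cconj c = 1 -> unitary U -> unitary (c *: U).
Proof.
rewrite /unitary => cc uU.
by rewrite adjCZ -scalemxAl -scalemxAr scalerA cc scale1r uU.
Qed.

Definition frob2 X : R :=
  complex.Re (X 0 0) ^+ 2 + complex.Im (X 0 0) ^+ 2 +
  complex.Re (X 0 1) ^+ 2 + complex.Im (X 0 1) ^+ 2 +
  complex.Re (X 1 0) ^+ 2 + complex.Im (X 1 0) ^+ 2 +
  complex.Re (X 1 1) ^+ 2 + complex.Im (X 1 1) ^+ 2.

Lemma trace_mulmx_adjC X : \tr (X *m adjC X) = toC (frob2 X).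
Proof.
by rewrite trace2E !mulmx2E !adjCE; apply: complex_ext; rewrite !reimE /frob2; ring.
Qed.

Definition pencil (r : R) X : M2 := X + toC r *: adjC (cmx X).

Lemma rdiag2_mul (a b c d : R) :
  rdiag2 a b *m rdiag2 c d = rdiag2 (a * c) (b * d) :> M2.
Proof.
by apply: matrix2P; rewrite !mulmx2E !mxE /=; apply: complex_ext; rewrite !reimE; ring.
Qed.

Lemma rdiag2_11 : rdiag2 1 1 = 1%:M :> M2.
Proof. by apply: matrix2P; rewrite !mxE. Qed.

Lemma det_rdiag2 (a b : R) : \det (rdiag2 a b : M2) = toC (a * b).
Proof. rewrite det2E !mxE /=; apply: complex_ext; rewrite !reimE; ring. Qed.

Lemma trace_rdiag2 (a b : R) : \tr (rdiag2 a b : M2) = toC (a + b).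
Proof. rewrite trace2E !mxE /=; apply: complex_ext; rewrite !reimE; ring. Qed.

Lemma adjC_rdiag2 (a b : R) : adjC (rdiag2 a b : M2) = rdiag2 a b.
Proof.
by apply: matrix2P; rewrite !adjCE !mxE /=; apply: complex_ext; rewrite !reimE; ring.
Qed.

Lemma rdiag2_lincomb (k r a b c d : R) :
  toC k *: (rdiag2 a b + toC r *: rdiag2 c d) =
  rdiag2 (k * (a + r * c)) (k * (b + r * d)) :> M2.
Proof. apply: matrix2P; rewrite !mxE /=; apply: complex_ext; rewrite !reimE; ring. Qed.

Lemma frob2Z (x : R) X : frob2 (toC x *: X) = x ^+ 2 * frob2 X.
Proof. by rewrite /frob2 !mxE !reimE; ring. Qed.

Lemma frob2_gt0 X : X != 0 -> 0 < frob2 X.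
Proof.
apply: contraNT; rewrite -leNgt /frob2 => frob_le0; apply/eqP.
have := sqr_ge0 (complex.Re (X 0 0)); have := sqr_ge0 (complex.Im (X 0 0)).
have := sqr_ge0 (complex.Re (X 0 1)); have := sqr_ge0 (complex.Im (X 0 1)).
have := sqr_ge0 (complex.Re (X 1 0)); have := sqr_ge0 (complex.Im (X 1 0)).
have := sqr_ge0 (complex.Re (X 1 1)); have := sqr_ge0 (complex.Im (X 1 1)).
move=> *; apply: matrix2P; rewrite !mxE; apply: complex_ext => /=;
by apply/eqP; rewrite -sqrf_eq0 eq_le sqr_ge0 andbT; lra.
Qed.

Lemma pencilZ (s r : R) X : pencil r (toC s *: X) = toC s *: pencil r X.
Proof. by rewrite /pencil cmxZ adjCZ cconj_toC !scalerA mulrC scalerDr scalerA. Qed.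

Lemma Re_det_lincomb_adjC_cmx (x y : R) B :
  complex.Re (\det (toC x *: B + toC y *: adjC (cmx B))) =
  (x ^+ 2 + y ^+ 2) * complex.Re (\det B) + x * y * frob2 B.
Proof. by rewrite !det2E !mxE /= !reimE /frob2; ring. Qed.

Lemma det_lincomb_adjC_cmx_neq0 (x y : R) B : B != 0 -> 0 <= complex.Re (\det B) ->
  0 < x -> 0 < y -> \det (toC x *: B + toC y *: adjC (cmx B)) != 0.
Proof.
move=> B_neq0 detB_ge0 x_gt0 y_gt0; apply/eqP => /(congr1 (@complex.Re R)).
have : 0 < x * y * frob2 B by rewrite !mulr_gt0 ?frob2_gt0.
have : 0 <= (x ^+ 2 + y ^+ 2) * complex.Re (\det B) by rewrite mulr_ge0 ?addr_ge0 ?sqr_ge0.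
by rewrite Re_det_lincomb_adjC_cmx /=; lra.
Qed.

End Matrix2.

Section PolarDecomposition.
Variable R : realType.
Local Notation M2 := 'M[R[i]]_2.
Variables (X P U V : M2) (l1 l2 : R).
Hypotheses (detX : \det X = 1) (uU : unitary U) (uV : unitary V).
Hypotheses (l1_gt0 : 0 < l1) (l2_gt0 : 0 < l2).
Hypotheses (XPU : X = P *m U) (PVDV : P = V *m rdiag2 l1 l2 *m adjC V).

Let uV' : adjC V *m V = 1%:M := unitary_adjC_mulmx uV.

Lemma polar_sv_mul : l1 * l2 = 1.
Proof.
have detV : \det V * \det (adjC V) = 1 by rewrite -det_mulmx uV det1.
have detU : \det U * cconj (\det U) = 1 by rewrite -det_adjC -det_mulmx uU det1.
have detP : \det P = toC (l1 * l2).
  by rewrite PVDV !det_mulmx det_rdiag2 mulrAC detV mul1r.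
have e : toC (l1 * l2) * \det U = 1 by rewrite -detP -det_mulmx -XPU.
have e' : toC (l1 * l2) * cconj (\det U) = 1.
  move/(congr1 (@cconj R)): e; rewrite cconjM cconj_toC => ->.
  by apply: complex_ext; rewrite /= ?oppr0.
have sq : toC ((l1 * l2) ^+ 2) = 1.
  by rewrite expr2 toCM -[LHS]mulr1 -detU mulrACA e e' mulr1.
have /eqP : (l1 * l2) ^+ 2 = 1 by move/(f_equal (@complex.Re R)): sq.
rewrite sqrf_eq1 => /orP[/eqP // | /eqP l12].
by move: (mulr_gt0 l1_gt0 l2_gt0); rewrite l12 ltr0N1.
Qed.

Let D := rdiag2 l1 l2 : M2.
Let Di := rdiag2 l2 l1 : M2.
Let DDi : D *m Di = 1%:M.
Proof. by rewrite rdiag2_mul polar_sv_mul mulrC polar_sv_mul rdiag2_11. Qed.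

Lemma polar_adjC_cmx : adjC (cmx X) = V *m Di *m adjC V *m U.
Proof.
apply: adjC_cmx_eq => //.
rewrite XPU adjC_mulmx PVDV !adjC_mulmx adjCK adjC_rdiag2 -!mulmxA.
rewrite (mulmxA (adjC V) V) uV' mul1mx (mulmxA D) DDi mul1mx.
by rewrite (mulmxA V) uV mul1mx unitary_adjC_mulmx.
Qed.

Lemma polar_frob2 : frob2 X = l1 ^+ 2 + l2 ^+ 2.
Proof.
have : \tr (X *m adjC X) = toC (l1 ^+ 2 + l2 ^+ 2).
  rewrite XPU adjC_mulmx -mulmxA (mulmxA U) uU mul1mx PVDV !adjC_mulmx adjCK.
  rewrite adjC_rdiag2 -!mulmxA (mulmxA (adjC V) V) uV' mul1mx mxtrace_mulC.
  by rewrite -!mulmxA uV' mulmx1 rdiag2_mul trace_rdiag2 !expr2.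
by rewrite trace_mulmx_adjC => /(f_equal (@complex.Re R)).
Qed.

Lemma polar_pencil (h k r : R) :
    l1 `^ h = k * (l1 + r * l2) -> l2 `^ h = k * (l2 + r * l1) ->
  V *m rdiag2 (l1 `^ h) (l2 `^ h) *m adjC V *m U = toC k *: pencil r X.
Proof.
move=> e1 e2; rewrite e1 e2 -rdiag2_lincomb /pencil polar_adjC_cmx {1}XPU PVDV.
by rewrite -scalemxAr -!scalemxAl mulmxDr !mulmxDl -scalemxAr -!scalemxAl.
Qed.

End PolarDecomposition.

Section PencilCoefficients.
Variable R : realType.
Implicit Types h m p d : R.

Lemma expRN_sub_le p d : 0 <= p -> 0 <= d ->
  0 <= expR (- p) - expR (- (p + d)) <= d.
Proof.
move=> p_ge0 d_ge0; rewrite opprD expRD.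
have := expR_ge1Dx (- d); have := expR_gt0 (- p).
have : expR (- p) <= 1 by rewrite expR_le1 oppr_le0.
have : expR (- d) <= 1 by rewrite expR_le1 oppr_le0.
by move=> *; apply/andP; split; nra.
Qed.

Lemma expR_ln_sqsum_approx h m : 0 <= h -> 0 <= m ->
  `|expR (- (2 * h * m)) - expR (- (h * ln (expR m ^+ 2 + expR (- m) ^+ 2)))| <= h.
Proof.
move=> h_ge0 m_ge0.
set d := ln (1 + expR (- m) ^+ 4).
have lnE : ln (expR m ^+ 2 + expR (- m) ^+ 2) = 2 * m + d.
  have -> : expR m ^+ 2 + expR (- m) ^+ 2 = expR (2 * m) * (1 + expR (- m) ^+ 4).
    by rewrite mulrDr mulr1 -!expRM_natl -expRD; congr (_ + expR _); ring.
  by rewrite lnM ?posrE ?expR_gt0 ?ltr_pwDl ?exprn_ge0 ?expR_ge0 // expRK.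
have d_ge0 : 0 <= d by rewrite ln_ge0 // lerDl exprn_ge0 ?expR_ge0.
have d_le1 : d <= 1.
  apply: (le_trans (le_ln1Dx _)).
    by rewrite (lt_le_trans _ (exprn_ge0 _ (expR_ge0 _))) ?ltrN10.
  by rewrite exprn_ile1 ?expR_ge0 // expR_le1 oppr_le0.
have /andP[lo hi] :=
  expRN_sub_le (mulr_ge0 (mulr_ge0 (ler0n _ 2) h_ge0) m_ge0) (mulr_ge0 h_ge0 d_ge0).
rewrite lnE (_ : h * (2 * m + d) = 2 * h * m + h * d); last by ring.
by rewrite ger0_norm //; nra.
Qed.

Lemma pencil_coef_pos h m : 0 < h -> 0 < m ->
  exists k r, [/\ k != 0,
    expR (h * m) = k * (expR m + r * expR (- m)),
    expR (h * - m) = k * (expR (- m) + r * expR m) &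
    `|r - expR (h * - m) ^+ 2| <= 2 * h].
Proof.
move=> h_gt0 m_gt0.
set E := expR m; set Ei := expR (- m); set a := expR (h * m); set b := expR (h * - m).
have Ei_def : Ei = E^-1 by rewrite /Ei expRN.
have b_def : b = a^-1 by rewrite /b mulrN expRN.
have E_gt1 : 1 < E by rewrite expR_gt1.
have Ei_gt0 : 0 < Ei := expR_gt0 _.
have Ei_lt1 : Ei < 1 by rewrite expR_lt1 oppr_lt0.
have EEi : E * Ei = 1 by rewrite /E /Ei -expRD subrr expR0.
have E_sq : 1 + 2 * m <= E ^+ 2 by rewrite /E -expRM_natl expR_ge1Dx.
have a_ge1 : 1 <= a by rewrite /a -expR0 ler_expR mulr_ge0 ?ltW.
have b_gt0 : 0 < b := expR_gt0 _.
have b_le1 : b <= 1 by rewrite expR_le1 mulrN oppr_le0 mulr_ge0 ?ltW.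
have b_sq_le1 : b ^+ 2 <= 1 := exprn_ile1 _ (ltW b_gt0) b_le1.
have ab : a * b = 1 by rewrite /a /b -expRD mulrN subrr expR0.
have b4 : 1 - b ^+ 4 <= 4 * h * m.
  have := expR_ge1Dx (- (4 * h * m)).
  rewrite (_ : b ^+ 4 = expR (- (4 * h * m))); first lra.
  by rewrite /b -expRM_natl; congr expR; ring.
have den_aE : 0 < a * E - b * Ei by nra.
have den_E : 0 < E ^+ 2 - Ei ^+ 2 by nra.
have den_a : 0 < a ^+ 2 * E ^+ 2 - 1 by nra.
(* Cramer's rule for the linear system in [k] and [k * r]. *)
exists ((a * E - b * Ei) / (E ^+ 2 - Ei ^+ 2)), ((b * E - a * Ei) / (a * E - b * Ei)).
split.
- by rewrite mulf_neq0 ?invr_eq0 ?gt_eqF.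
- by field; rewrite !gt_eqF.
- by field; rewrite !gt_eqF.
have -> : (b * E - a * Ei) / (a * E - b * Ei) - b ^+ 2 =
          - ((a ^+ 2 - b ^+ 2) / (a ^+ 2 * E ^+ 2 - 1)).
  move: den_aE den_a; rewrite b_def Ei_def => den_aE den_a.
  by field; rewrite exprMn !gt_eqF ?expR_gt0.
have a2b2 : a ^+ 2 - b ^+ 2 <= 2 * h * (a ^+ 2 * E ^+ 2 - 1).
  have key : 1 - b ^+ 4 <= 2 * h * (E ^+ 2 - b ^+ 2) by nra.
  have a_neq0 : a != 0 by rewrite gt_eqF ?expR_gt0.
  have -> : a ^+ 2 - b ^+ 2 = a ^+ 2 * (1 - b ^+ 4) by rewrite b_def; field.
  have -> : 2 * h * (a ^+ 2 * E ^+ 2 - 1) = a ^+ 2 * (2 * h * (E ^+ 2 - b ^+ 2)).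
    by rewrite b_def; field.
  by rewrite ler_wpM2l ?exprn_ge0 ?expR_ge0.
rewrite normrN ger0_norm ?ler_pdivrMr // divr_ge0 ?(ltW den_a) //; nra.
Qed.

Lemma pencil_coef_approx h m : 0 < h ->
  exists k r, [/\ k != 0,
    expR (h * m) = k * (expR m + r * expR (- m)),
    expR (h * - m) = k * (expR (- m) + r * expR m) &
    `|r - expR (- (h * ln (expR m ^+ 2 + expR (- m) ^+ 2)))| <= 3 * h].
Proof.
move=> h_gt0; wlog m_ge0 : m / 0 <= m.
  move=> ge0_case; have [/ge0_case//|m_lt0] := lerP 0 m.
  have Nm_ge0 : 0 <= - m by rewrite oppr_ge0 ltW.
  have [k [r [k_neq0 e1 e2 approx]]] := ge0_case (- m) Nm_ge0.
  rewrite !opprK [expR (- m) ^+ 2 + _]addrC in e1 e2 approx.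
  by exists k, r.
have [m_gt0|m_le0] := ltrP 0 m; last first.
  have -> : m = 0 by apply/eqP; rewrite eq_le m_le0.
  set T := expR (- (h * _)); have T_gt0 : 0 < T := expR_gt0 _.
  have T1_neq0 : 1 + T != 0 by rewrite gt_eqF ?addr_gt0.
  exists (1 + T)^-1, T; rewrite oppr0 !mulr0 expR0 mulr1 mulVf //.
  by rewrite subrr normr0 mulr_ge0 ?ltW // invr_eq0.
have [k [r [k_neq0 e1 e2 approx]]] := pencil_coef_pos h_gt0 m_gt0.
exists k, r; split => //.
have := expR_ln_sqsum_approx (ltW h_gt0) m_ge0.
rewrite (_ : expR (- (2 * h * m)) = expR (h * - m) ^+ 2); last first.
  by rewrite -expRM_natl; congr expR; ring.
by move=> approx'; apply: le_trans (ler_distD (expR (h * - m) ^+ 2) _ _) _; lra.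
Qed.

End PencilCoefficients.

Section RtildeApprox.
Variable R : realType.
Local Notation C := R[i].
Local Notation M2 := 'M[C]_2.

Lemma Rtilde_pencil (h : R) (X Y : M2) : \det X = 1 -> Rtilde h X Y ->
  exists (c : C) (l1 l2 : R),
    [/\ c != 0, 0 < l1, l1 * l2 = 1, frob2 X = l1 ^+ 2 + l2 ^+ 2 &
      forall k r : R, l1 `^ h = k * (l1 + r * l2) -> l2 `^ h = k * (l2 + r * l1) ->
        Y = (c * toC k) *: pencil r X].
Proof.
move=> detX [_ [A [P [U [Q [[_ [c0 [c0_neq0 eA]]] detA _ uU]]]]]].
move=> [XPU [V [l1 [l2 [uV l1_gt0 l2_gt0 PVDV QVDV]]]] [_ [c1 [c1_neq0 eY]]]].
have c0_sq : c0 ^+ 2 = 1 by move: detA; rewrite eA detZ detX mulr1.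
have c0_real := sqr_eq1_cconj c0_sq.
(* [c0 = +-1], so [X = P (c0 U)] is itself a polar decomposition. *)
have {}XPU : X = P *m (c0 *: U).
  by rewrite -scalemxAr -XPU eA scalerA -expr2 c0_sq scale1r.
have {}uU : unitary (c0 *: U) by apply: unitaryZ => //; rewrite c0_real -expr2.
exists (c1 * c0), l1, l2; split => //.
- by rewrite mulf_neq0.
- exact: (polar_sv_mul detX uU uV l1_gt0 l2_gt0 XPU PVDV).
- exact: (polar_frob2 uU uV XPU PVDV).
move=> k r e1 e2; rewrite -scalerA -(polar_pencil detX uU uV l1_gt0 l2_gt0 XPU PVDV e1 e2).
by rewrite eY QVDV -scalemxAr scalerA -mulrA -expr2 c0_sq mulr1.
Qed.

Lemma Rtilde_pencil_approx (h : R) (X Y : M2) : 0 < h -> \det X = 1 -> Rtilde h X Y ->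
  exists (c : C) (r : R), [/\ c != 0, Y = c *: pencil r X &
    `|r - expR (- (h * ln (frob2 X)))| <= 3 * h].
Proof.
move=> h_gt0 detX RtXY.
have [c [l1 [l2 [c_neq0 l1_gt0 l12 frobX RtY]]]] := Rtilde_pencil detX RtXY.
set m := ln l1.
have l1E : l1 = expR m by rewrite /m lnK // posrE.
have l2E : l2 = expR (- m).
  by rewrite expRN -l1E; apply: (mulfI (lt0r_neq0 l1_gt0)); rewrite l12 mulfV ?lt0r_neq0.
have [k [r [k_neq0 e1 e2 approx]]] := pencil_coef_approx m h_gt0.
exists (c * toC k), r; split.
- by rewrite mulf_neq0 // toC_eq0.
- by apply: RtY; rewrite l1E l2E /powR gt_eqF ?expR_gt0 // expRK.
- by rewrite frobX l1E l2E.
Qed.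

Lemma Rtilde_log_family (A Y : R -> M2) :
    (forall t, 1 < t -> \det (A t) = 1) ->
    (forall t, 1 < t -> Rtilde (ln t)^-1 (A t) (Y t)) ->
  exists (c : R -> C) (r : R -> R), forall t, 1 < t ->
    [/\ c t != 0, Y t = c t *: pencil (r t) (A t) &
      `|r t - expR (- ((ln t)^-1 * ln (frob2 (A t))))| <= 3 * (ln t)^-1].
Proof.
move=> detA RtAY.
have /choice[cr cr_spec] : forall t : R, exists cr : C * R, 1 < t ->
    [/\ cr.1 != 0, Y t = cr.1 *: pencil cr.2 (A t) &
      `|cr.2 - expR (- ((ln t)^-1 * ln (frob2 (A t))))| <= 3 * (ln t)^-1].
  move=> t; have [t_gt1|] := ltrP 1 t; last by exists (0, 0).
  have h_gt0 : 0 < (ln t)^-1 by rewrite invr_gt0 ln_gt0.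
  by have [c [r ?]] := Rtilde_pencil_approx h_gt0 (detA t t_gt1) (RtAY t t_gt1); exists (c, r).
by exists (fun t => (cr t).1), (fun t => (cr t).2).
Qed.

End RtildeApprox.

Section Convergence.
Variable R : realType.
Local Notation C := R[i].
Local Notation M2 := 'M[C]_2.
Implicit Types (f g : R -> C) (F G : R -> M2).

Lemma inv_ln_cvg0 : (ln t)^-1 @[t --> +oo] --> (0 : R).
Proof.
apply/cvgrPdist_lt => e e_gt0; near=> t.
have t_gt : expR e^-1 < t by near: t; apply: nbhs_pinfty_gt; rewrite num_real.
have lnt_gt : e^-1 < ln t by rewrite -ltr_expR lnK // posrE (lt_trans _ t_gt) ?expR_gt0.
have einv_gt0 : 0 < e^-1 by rewrite invr_gt0.
have lnt_gt0 := lt_trans einv_gt0 lnt_gt.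
rewrite sub0r normrN ger0_norm ?invr_ge0 ?(ltW lnt_gt0) //.
by rewrite -[e]invrK ltf_pV2 ?posrE.
Unshelve. all: by end_near.
Qed.

Lemma ccvg_cst (a : C) : ccvg (fun=> a) a.
Proof. by split; apply: cvg_cst. Qed.

Lemma ccvg_toC (u : R -> R) (a : R) :
  u t @[t --> +oo] --> a -> ccvg (fun t => toC (u t)) (toC a).
Proof. by move=> u_cvg; split => //; apply: cvg_cst. Qed.

Lemma ccvgD f g a b : ccvg f a -> ccvg g b -> ccvg (fun t => f t + g t) (a + b).
Proof.
move=> [fRe fIm] [gRe gIm]; split; rewrite ?complex_ReD ?complex_ImD;
by under eq_fun do rewrite ?complex_ReD ?complex_ImD; apply: cvgD.
Qed.

Lemma ccvgN f a : ccvg f a -> ccvg (fun t => - f t) (- a).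
Proof.
move=> [fRe fIm]; split; rewrite ?complex_ReN ?complex_ImN;
by under eq_fun do rewrite ?complex_ReN ?complex_ImN; apply: cvgN.
Qed.

Lemma ccvgM f g a b : ccvg f a -> ccvg g b -> ccvg (fun t => f t * g t) (a * b).
Proof.
move=> [fRe fIm] [gRe gIm]; split.
- by rewrite complex_ReM; under eq_fun do rewrite complex_ReM; apply: cvgB; apply: cvgM.
- by rewrite complex_ImM; under eq_fun do rewrite complex_ImM; apply: cvgD; apply: cvgM.
Qed.

Lemma ccvg_cconj f a : ccvg f a -> ccvg (fun t => cconj (f t)) (cconj a).
Proof. by move=> [fRe fIm]; split => //=; apply: cvgN. Qed.

Lemma mx_cvg_near F G L :
  (\forall t \near +oo, F t = G t) -> mx_cvg G L -> mx_cvg F L.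
Proof.
move=> FG G_cvg i j; have [GRe GIm] := G_cvg i j.
by split; apply: cvg_trans (near_eq_cvg _) _; [|exact: GRe| |exact: GIm];
  apply: filterS FG => t ->.
Qed.

Lemma mx_cvgD F G L N :
  mx_cvg F L -> mx_cvg G N -> mx_cvg (fun t => F t + G t) (L + N).
Proof.
move=> F_cvg G_cvg i j; rewrite mxE.
by under eq_fun do rewrite mxE; apply: ccvgD.
Qed.

Lemma mx_cvgZ (u : R -> C) (a : C) F L :
  ccvg u a -> mx_cvg F L -> mx_cvg (fun t => u t *: F t) (a *: L).
Proof.
move=> u_cvg F_cvg i j; rewrite mxE.
by under eq_fun do rewrite mxE; apply: ccvgM.
Qed.

Lemma mx_cvg_adjC_cmx F L :
  mx_cvg F L -> mx_cvg (fun t => adjC (cmx (F t))) (adjC (cmx L)).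
Proof.
move=> F_cvg i j; rewrite adjCE mxE.
under eq_fun do rewrite adjCE mxE.
by have [->|->] := ord2P i; have [->|->] := ord2P j;
  apply: ccvg_cconj => //=; apply: ccvgN.
Qed.

Lemma mx_cvg_pencil (r : R -> R) (r0 : R) F L :
  r t @[t --> +oo] --> r0 -> mx_cvg F L ->
  mx_cvg (fun t => pencil (r t) (F t)) (pencil r0 L).
Proof.
move=> r_cvg F_cvg; apply: mx_cvgD => //.
by apply: mx_cvgZ; [apply: ccvg_toC | apply: mx_cvg_adjC_cmx].
Qed.

Lemma det_cvg F L : mx_cvg F L -> ccvg (fun t => \det (F t)) (\det L).
Proof.
move=> F_cvg; rewrite det2E; under eq_fun do rewrite det2E.
by apply: ccvgD; [|apply: ccvgN]; apply: ccvgM.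
Qed.

Lemma frob2_cvg F L : mx_cvg F L -> frob2 (F t) @[t --> +oo] --> frob2 L.
Proof.
move=> F_cvg; rewrite /frob2; under eq_fun do rewrite /frob2.
by repeat apply: cvgD; rewrite expr2; under eq_fun do rewrite expr2;
  apply: cvgM; first [exact: (F_cvg _ _).1 | exact: (F_cvg _ _).2].
Qed.

Lemma Re_det_ge0_of_cvg (F : R -> M2) (L : M2) : mx_cvg F L ->
  (\forall t \near +oo, 0 <= complex.Re (\det (F t))) -> 0 <= complex.Re (\det L).
Proof.
move=> F_cvg detF_ge0; have [detRe _] := det_cvg F_cvg.
exact: (closed_cvg [set x : R | 0 <= x] (@closed_ge R 0) _ _ detRe).
Qed.

Lemma log_frob2_cvg (A : R -> M2) (alpha : R) B : B != 0 ->
    mx_cvg (fun t => toC (t `^ (- alpha)) *: A t) B ->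
  (ln t)^-1 * ln (frob2 (A t)) @[t --> +oo] --> 2 * alpha.
Proof.
set M := fun t => _ *: A t => B_neq0 M_cvg.
have frobM_cvg := frob2_cvg M_cvg.
have frobM_gt0 : \forall t \near +oo, 0 < frob2 (M t).
  exact: cvgr_gt _ frobM_cvg 0 (frob2_gt0 B_neq0).
have log_frob2E : \forall t \near +oo,
    2 * alpha + (ln t)^-1 * ln (frob2 (M t)) = (ln t)^-1 * ln (frob2 (A t)).
  near=> t.
  have t_gt1 : 1 < t by near: t; apply: nbhs_pinfty_gt; rewrite num_real.
  have frobMt_gt0 : 0 < frob2 (M t) by near: t; exact: frobM_gt0.
  have s_gt0 : 0 < t `^ (- alpha) by rewrite powR_gt0 // (lt_trans ltr01).
  have frobMt : frob2 (M t) = t `^ (- alpha) ^+ 2 * frob2 (A t) by rewrite frob2Z.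
  have frobAt_gt0 : 0 < frob2 (A t).
    by move: frobMt_gt0; rewrite frobMt pmulr_rgt0 // exprn_gt0.
  rewrite frobMt lnM ?posrE ?exprn_gt0 // lnXn // ln_powR.
  by field; rewrite gt_eqF ?ln_gt0.
have : 2 * alpha + (ln t)^-1 * ln (frob2 (M t)) @[t --> +oo] -->
       2 * alpha + 0 * ln (frob2 B).
  apply: cvgD; first exact: cvg_cst.
  apply: cvgM; first exact: inv_ln_cvg0.
  by apply: cvg_comp; [exact: frobM_cvg | exact: continuous_ln (frob2_gt0 B_neq0)].
by rewrite mul0r addr0; apply: cvg_trans (near_eq_cvg log_frob2E).
Unshelve. all: by end_near.
Qed.

Lemma cvg_of_approx (r u e : R -> R) (l : R) :
    u t @[t --> +oo] --> l -> e t @[t --> +oo] --> 0 ->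
    (\forall t \near +oo, `|r t - u t| <= e t) ->
  r t @[t --> +oo] --> l.
Proof.
move=> u_cvg e_cvg0 r_approx.
have diff_cvg0 : (r t - u t) @[t --> +oo] --> 0.
  apply: (squeeze_cvgr (f := fun t => - e t) (h := e)) => //.
  - by apply: filterS r_approx => t; rewrite ler_norml.
  - by rewrite -oppr0; apply: cvgN.
have -> : r = fun t => (r t - u t) + u t by apply: funext => t; rewrite subrK.
by rewrite -[X in _ --> X]add0r; apply: cvgD.
Qed.

Lemma Rtilde_log_pencil_cvg (A Y : R -> M2) (alpha : R) (B : M2) :
    (forall t, 1 < t -> \det (A t) = 1) ->
    (forall t, 1 < t -> Rtilde (ln t)^-1 (A t) (Y t)) ->
    B != 0 -> mx_cvg (fun t => toC (t `^ (- alpha)) *: A t) B ->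
  exists (c : R -> C) (r : R -> R),
    (\forall t \near +oo, c t != 0 /\ Y t = c t *: pencil (r t) (A t)) /\
    r t @[t --> +oo] --> expR (- (2 * alpha)).
Proof.
move=> detA RtAY B_neq0 M_cvg.
have [c [r family]] := Rtilde_log_family detA RtAY.
have t_gt1 : \forall t \near +oo, 1 < (t : R) by apply: nbhs_pinfty_gt; rewrite num_real.
exists c, r; split; first by apply: filterS t_gt1 => t /family[].
apply: (cvg_of_approx (u := fun t => expR (- ((ln t)^-1 * ln (frob2 (A t)))))
                      (e := fun t => 3 * (ln t)^-1)).
- apply: cvg_comp; [apply: cvgN; exact: log_frob2_cvg B_neq0 M_cvg | exact: continuous_expR].
- by rewrite -(mulr0 3); apply: cvgM; [apply: cvg_cst | exact: inv_ln_cvg0].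
- by apply: filterS t_gt1 => t /family[].
Qed.

End Convergence.

Theorem lemma3p1 (R : realType) (A : R -> 'M[R[i]]_2) (alpha : R)
    (B : 'M[R[i]]_2) :
  (forall t : R, 1 < t -> \det (A t) = 1) ->
  B != 0 ->
  mx_cvg (fun t => toC (t `^ (- alpha)) *: A t) B ->
  forall Y : R -> 'M[R[i]]_2,
    (forall t : R, 1 < t -> Rtilde (ln t)^-1 (A t) (Y t)) ->
    let L := toC (expR alpha) *: B + toC (expR (- alpha)) *: adjC (cmx B) in
    \det L != 0 /\ proj_cvg Y L.
Proof.
move=> detA B_neq0 M_cvg Y RtAY L.
have t_gt1 : \forall t \near +oo, 1 < (t : R) by apply: nbhs_pinfty_gt; rewrite num_real.
have detB_ge0 : 0 <= complex.Re (\det B).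
  apply: (Re_det_ge0_of_cvg M_cvg); apply: filterS t_gt1 => t /detA detAt.
  by rewrite detZ detAt mulr1 expr2 -toCM Re_toC -expr2 sqr_ge0.
have detL : \det L != 0 by apply: det_lincomb_adjC_cmx_neq0; rewrite ?expR_gt0.
split => //; split; first by apply: contraNneq detL => ->; rewrite det0.
have [c [r [family r_cvg]]] := Rtilde_log_pencil_cvg detA RtAY B_neq0 M_cvg.
have -> : L = toC (expR alpha) *: pencil (expR (- (2 * alpha))) B.
  by rewrite /L /pencil scalerDr scalerA -toCM -expRD; congr (_ + toC (expR _) *: _); ring.
exists (fun t => toC (expR alpha * t `^ (- alpha)) / c t); split.
  apply: filterS2 t_gt1 family => t t_gt1 [c_neq0 _].
  rewrite mulf_neq0 ?invr_eq0 // toC_eq0 gt_eqF // mulr_gt0 ?expR_gt0 // powR_gt0 //.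
  exact: lt_trans ltr01 t_gt1.
apply: (mx_cvg_near
  (G := fun t => toC (expR alpha) *: pencil (r t) (toC (t `^ (- alpha)) *: A t))).
  apply: filterS family => t [c_neq0 ->].
  by rewrite pencilZ scalerA divfK // toCM -scalerA.
by apply: mx_cvgZ; [apply: ccvg_cst | apply: mx_cvg_pencil].
Qed.
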